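(* Let $(G,\pi)$ be a colored graph, $\mathrm{Sel}$ a cell selector, and consider the IR-tree $\Gamma=\Gamma_{\mathrm{Sel}}(G,\pi)$ with each node $\nu$ colored by the quotient graph $Q(G,\mathrm{Ref}(G,\pi,\nu))$. Let $n_1,n_2$ be nodes of $\Gamma$ at levels (depths) $l_1$ and $l_2$, respectively. (1) If $l_1\neq l_2$, then $n_1$ and $n_2$ have different colors. (2) Consider the two walks from the root to $n_1$ and to $n_2$, respectively. If some node on the first walk and some node on the second walk lie on the same level and have different colors, then $n_1$ and $n_2$ have different colors.
   Context: A coloring of a graph $G=(V,E)$ is a surjective map $\pi\colon V\to\{1,\dots,k\}$ with cells $\pi^{-1}(i)$; it is discrete if all cells are singletons; it is equitable if for all colors $i,j$ all $i$-colored vertices have the same number of $j$-colored neighbors. $\mathrm{Ref}(G,\pi,\nu)$, for a sequence $\nu$ of vertices, denotes the coarsest equitable coloring finer than $\pi$ in which each vertex of $\nu$ is a singleton with its own special individualization color (the $i$-th vertex of $\nu$ getting the $i$-th special color, these colors being distinct from all other colors), computed isomorphism-invariantly. A cell selector is an isomorphism-invariant function $\mathrm{Sel}$ assigning to $(G,\pi)$ the empty set if $\pi$ is discrete and otherwise a cell of $\pi$ of size greater than $1$. The IR-tree $\Gamma_{\mathrm{Sel}}(G,\pi)$ has as nodes sequences of vertices: the root is the empty sequence, and the children of $\nu$ are $\nu.v$ for $v\in\mathrm{Sel}(G,\mathrm{Ref}(G,\pi,\nu))$. For an equitable coloring $\rho$, the quotient graph $Q(G,\rho)$ is the complete directed graph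 with self-loops on the set of colors of $\rho$, each vertex labeled by its color and each edge $(c_1,c_2)$ labeled by the number of neighbors in cell $c_2$ of any vertex of cell $c_1$. Two nodes have the same color iff their quotient graphs are equal. *)

From mathcomp Require Import all_boot all_fingroup.
Set Implicit Arguments.
Unset Strict Implicit.
Unset Printing Implicit Defensive.

Definition simple_graph (V : finType) (e : rel V) : Prop :=
  symmetric e /\ irreflexive e.

Definition is_coloring (V : finType) (k : nat) (pi : V -> nat) : Prop :=
  (forall v, 0 < pi v <= k) /\ (forall i, 0 < i <= k -> exists v, pi v = i).

(* Color names used for refined colorings: isomorphism-invariant
   color-refinement histories (finite trees of naturals). *)
Definition color := GenTree.tree nat.
Definition col_le (x y : color) : bool := pickle x <= pickle y.

(* Initial coloring of Ref(G,pi,nu): the pi-color together with the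
   individualization index (i for the i-th vertex of nu, 0 if not in nu). *)
Definition wl_init (V : finType) (pi : V -> nat) (nu : seq V) : V -> color :=
  fun u => GenTree.Node 0 [:: GenTree.Leaf (pi u);
                              GenTree.Leaf (if u \in nu then (index u nu).+1 else 0)].

Definition wl_step (V : finType) (e : rel V) (c : V -> color) : V -> color :=
  fun u => GenTree.Node 1 (c u :: sort col_le (map c (filter (e u) (enum V)))).

(* Ref(G,pi,nu): after #|V| rounds the partition is stable, i.e. it is the
   coarsest equitable coloring finer than pi with nu individualized. *)
Definition Ref (V : finType) (e : rel V) (pi : V -> nat) (nu : seq V) : V -> color :=
  iter #|V| (wl_step e) (wl_init pi nu).

(* Quotient graph Q(G,rho): the (sorted) set of colors, and the complete
   directed graph with loops on it, edge (c1,c2) labelled by the number of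
   neighbours of color c2 of a (any, rho being equitable) vertex of color c1. *)
Definition colors_of (V : finType) (rho : V -> color) : seq color :=
  sort col_le (undup (map rho (enum V))).

Definition qcount (V : finType) (e : rel V) (rho : V -> color) (c1 c2 : color) : nat :=
  match [pick v | rho v == c1] with
  | Some v => #|[set w | e v w & rho w == c2]|
  | None => 0
  end.

Definition quotient (V : finType) (e : rel V) (rho : V -> color)
  : seq color * seq (color * color * nat) :=
  let cs := colors_of rho in
  (cs, [seq (c1, c2, qcount e rho c1 c2) | c1 <- cs, c2 <- cs]).

Definition cell_selector (V : finType)
  (Sel : rel V -> (V -> color) -> {set V}) : Prop :=
  forall e : rel V, simple_graph e -> forall rho : V -> color,
    (injective rho -> Sel e rho = set0) /\
    (~ injective rho ->
       exists v, Sel e rho = [set w | rho w == rho v] /\ 1 < #|Sel e rho|) /\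
    (forall phi : {perm V},
       Sel (fun x y => e ((phi^-1)%g x) ((phi^-1)%g y)) (fun x => rho ((phi^-1)%g x))
       = phi @: Sel e rho).

Inductive ir_node (V : finType) (e : rel V) (pi : V -> nat)
  (Sel : rel V -> (V -> color) -> {set V}) : seq V -> Prop :=
| ir_root : ir_node e pi Sel [::]
| ir_child nu v : ir_node e pi Sel nu -> v \in Sel e (Ref e pi nu) ->
                  ir_node e pi Sel (rcons nu v).

Definition node_color (V : finType) (e : rel V) (pi : V -> nat) (nu : seq V) :=
  quotient e (Ref e pi nu).

From Pilot Require Import Defs.
From mathcomp Require Import all_boot all_fingroup.

Set Implicit Arguments.
Unset Strict Implicit.
Unset Printing Implicit Defensive.

(* Every color of [Ref e pi nu] is a refinement history that still records, #|V| rounds down,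
   the initial color and hence the individualization index of its vertex.  The largest index
   occurring is the depth of the node (its vertices are distinct, since a selected cell is never
   a singleton), and erasing the indices above [l] from all histories turns the colors of [nu]
   into those of [take l nu]: the color set of a node determines its depth and the color sets of
   its ancestors.  Moreover the coloring is equitable after #|V| - 1 rounds, as each round that
   does not yet reach equitability splits a cell; so in the #|V|-th round the history of a color
   records the neighbour counts of its cell, and the quotient graph is a function of the color
   set alone. *)

Lemma sort_colP (s t : seq color) :
  reflect (sort col_le s = sort col_le t) (perm_eq s t).
Proof.
apply: perm_sortP.
- by move=> x y; apply: leq_total.
- by move=> x y z; apply: leq_trans.
- by move=> x y /anti_leq; apply: (pcan_inj (@pickleK _)).
Qed.

Lemma card_set_count (T : finType) (P : pred T) : #|[set x | P x]| = count P (enum T).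
Proof.
rewrite cardsE cardE -size_filter; apply/perm_size/uniq_perm => [||x].
- exact: enum_uniq.
- exact: filter_uniq (enum_uniq _).
- by rewrite mem_enum mem_filter mem_enum andbT.
Qed.

Lemma mem_colors_of (V : finType) (c : V -> color) : colors_of c =i codom c.
Proof. by move=> t; rewrite /colors_of mem_sort mem_undup codomE. Qed.

Lemma colors_of_recolor (V : finType) (f : color -> color) (c c' : V -> color) :
  f \o c =1 c' -> colors_of c' = sort col_le (undup (map f (colors_of c))).
Proof.
move=> fc; apply/sort_colP/uniq_perm; rewrite ?undup_uniq // => t.
rewrite !mem_undup -(eq_map fc) map_comp.
by apply: eq_mem_map => s; rewrite mem_colors_of codomE.
Qed.

Section Refinement.

Variables (V : finType) (e : rel V).
Implicit Types (c : V -> color) (pi : V -> nat) (nu : seq V).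

Lemma eq_wl_step c c' : c =1 c' -> wl_step e c =1 wl_step e c'.
Proof. by move=> eq_c u; rewrite /wl_step eq_c (eq_map eq_c). Qed.

Lemma wl_step_inj c u w : wl_step e c u = wl_step e c w -> c u = c w.
Proof. by case. Qed.

Definition recolor_step (f : color -> color) (t : color) : color :=
  if t is GenTree.Node n (a :: nbrs) then GenTree.Node n (f a :: sort col_le (map f nbrs))
  else t.

Lemma recolor_wl_step f c u : recolor_step f (wl_step e c u) = wl_step e (f \o c) u.
Proof.
congr (GenTree.Node 1 (_ :: _)); apply/sort_colP.
by rewrite map_comp; apply: perm_map; rewrite perm_sort.
Qed.

Lemma iter_recolor_wl_step f c c' r : f \o c =1 c' ->
  iter r recolor_step f \o iter r (wl_step e) c =1 iter r (wl_step e) c'.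
Proof.
move=> fc; elim: r => // r IH u.
exact: etrans (recolor_wl_step _ _ u) (eq_wl_step IH u).
Qed.

Definition equitable c :=
  [forall u, forall w, (c u == c w) ==> (wl_step e c u == wl_step e c w)].

Lemma equitableP c :
  reflect (forall u w, c u = c w -> wl_step e c u = wl_step e c w) (equitable c).
Proof.
apply: (iffP forallP) => [eq_c u w cuw | eq_c u]; last first.
  by apply/forallP => w; apply/implyP => /eqP /eq_c ->.
by have /forallP/(_ w) := eq_c u; rewrite cuw eqxx => /eqP.
Qed.

Lemma equitable_wl_stepE c u w :
  equitable c -> (wl_step e c u == wl_step e c w) = (c u == c w).
Proof.
by move/equitableP=> eq_c; apply/eqP/eqP => [/wl_step_inj | /eq_c].
Qed.

(* On an equitable coloring the next round merely renames the cells. *)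
Lemma equitable_wl_step c : equitable c -> equitable (wl_step e c).
Proof.
move=> eq_c; apply/equitableP => u w step_uw.
pose rename t := if [pick v | c v == t] is Some v then wl_step e c v else t.
have renameE x : wl_step e c x = rename (c x).
  rewrite /rename; case: pickP => [v /eqP cvx | /(_ x)]; last by rewrite eqxx.
  by apply/eqP; rewrite equitable_wl_stepE // cvx.
by rewrite (eq_wl_step renameE u) (eq_wl_step renameE w) -!recolor_wl_step step_uw.
Qed.

Definition class_reps c :=
  [set u | [forall w, (c w == c u) ==> (enum_rank u <= enum_rank w)]].

Lemma class_repsP c u : exists2 a, c a = c u & a \in class_reps c.
Proof.
have [a /eqP cau a_min] :=
  @arg_minnP V u (fun a => c a == c u) (fun a => val (enum_rank a)) (eqxx _).
exists a => //; rewrite inE; apply/forallP => w; apply/implyP => /eqP cwa.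
by apply: a_min; rewrite cwa cau.
Qed.

Lemma class_reps_wl_step c : class_reps c \subset class_reps (wl_step e c).
Proof.
apply/subsetP => u; rewrite !inE => /forallP u_min; apply/forallP => w.
by apply/implyP => /eqP/wl_step_inj cwu; have := u_min w; rewrite cwu eqxx.
Qed.

Lemma class_reps_proper c :
  ~~ equitable c -> class_reps c \proper class_reps (wl_step e c).
Proof.
rewrite /equitable negb_forall => /existsP [u]; rewrite negb_forall => /existsP [w].
rewrite negb_imply => /andP [/eqP cuw step_uw].
rewrite properE class_reps_wl_step /=; apply/negP => /subsetP sub.
have [a step_au /sub] := class_repsP (wl_step e c) u.
have [b step_bw /sub] := class_repsP (wl_step e c) w.
rewrite !inE => /forallP/(_ a) b_min /forallP/(_ b) a_min.
have cab : c a = c b by rewrite (wl_step_inj step_au) (wl_step_inj step_bw).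
move: a_min b_min; rewrite cab eqxx /= => ab ba.
have /enum_rank_inj a_b : enum_rank a = enum_rank b by apply/val_inj/anti_leq; rewrite ab.
by move: step_uw; rewrite -step_au -step_bw a_b eqxx.
Qed.

Lemma equitable_iter_card c : equitable (iter #|V|.-1 (wl_step e) c).
Proof.
pose c_ m := iter m (wl_step e) c.
have many_classes m : ~~ equitable (c_ m) -> m < #|class_reps (c_ m)|.
  elim: m => [|m IH] not_eq.
    move: not_eq; rewrite /equitable negb_forall => /existsP [u _].
    by have [a _ a_rep] := class_repsP (c_ 0) u; apply/card_gt0P; exists a.
  have not_eq_m : ~~ equitable (c_ m) by apply: contra not_eq; apply: equitable_wl_step.
  exact: leq_ltn_trans (IH not_eq_m) (proper_card (class_reps_proper not_eq_m)).
apply/negPn/negP => not_eq.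
have := leq_ltn_trans (many_classes _ not_eq) (proper_card (class_reps_proper not_eq)).
move/leq_trans/(_ (max_card _)).
by case: #|V| => // n; rewrite ltnn.
Qed.

Definition nbr_count (t1 t2 : color) : nat :=
  if (t1, t2) is (GenTree.Node _ (_ :: nbrs), GenTree.Node _ (prev :: _))
  then count_mem prev nbrs else 0.

Definition quotient_of_colors (cs : seq color) : seq color * seq (color * color * nat) :=
  (cs, [seq (t1, t2, nbr_count t1 t2) | t1 <- cs, t2 <- cs]).

Lemma nbr_count_wl_step c u w :
  nbr_count (wl_step e c u) (wl_step e c w) = count_mem (c w) (map c (filter (e u) (enum V))).
Proof. exact: seq.permP (permEl (perm_sort col_le _)) _. Qed.

Lemma quotient_equitable_step c : equitable c ->
  Defs.quotient e (wl_step e c) = quotient_of_colors (colors_of (wl_step e c)).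
Proof.
move=> eq_c; congr pair; apply/eq_in_allpairs => t1 t2.
rewrite !mem_colors_of => /codomP [v ->] /codomP [w ->].
rewrite /qcount; case: pickP => [u /eqP step_uv | /(_ v)]; last by rewrite eqxx.
rewrite -step_uv; congr (_, _, _) => /=.
rewrite nbr_count_wl_step card_set_count [RHS]count_map count_filter.
by apply: eq_count => x; rewrite /= equitable_wl_stepE // andbC.
Qed.

Lemma quotient_Ref pi nu :
  Defs.quotient e (Ref e pi nu) = quotient_of_colors (colors_of (Ref e pi nu)).
Proof.
have [V0 | V_gt0] := posnP #|V|.
  have enumV0 : enum V = [::] by apply/size0nil; rewrite -cardT V0.
  by rewrite /Defs.quotient /quotient_of_colors /colors_of enumV0.
rewrite /Ref -(prednK V_gt0); exact: quotient_equitable_step (equitable_iter_card _).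
Qed.

Definition wl_parent (t : color) : color := if t is GenTree.Node _ (a :: _) then a else t.

Definition ind_tag (t : color) : nat :=
  if t is GenTree.Node _ [:: _; GenTree.Leaf i] then i else 0.

Lemma iter_wl_parent r c u : iter r wl_parent (iter r (wl_step e) c u) = c u.
Proof. by elim: r => // r IH; rewrite iterSr. Qed.

Lemma ind_tag_Ref pi nu u :
  ind_tag (iter #|V| wl_parent (Ref e pi nu u)) = if u \in nu then (index u nu).+1 else 0.
Proof. by rewrite iter_wl_parent. Qed.

Lemma Ref_individualized pi nu u w : u \in nu -> Ref e pi nu w = Ref e pi nu u -> w = u.
Proof.
move=> nu_u /(congr1 (ind_tag \o iter #|V| wl_parent)) /=; rewrite !ind_tag_Ref nu_u.
by case: ifP => // nu_w [] /(congr1 (nth u nu)); rewrite !nth_index.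
Qed.

Lemma bigmax_ind_tag_Ref pi nu : uniq nu ->
  \max_(t <- colors_of (Ref e pi nu)) ind_tag (iter #|V| wl_parent t) = size nu.
Proof.
move=> nu_uniq; apply/eqP; rewrite eqn_leq; apply/andP; split.
  apply/bigmax_leqP_seq => t; rewrite mem_colors_of => /codomP [u ->] _.
  by rewrite ind_tag_Ref; case: ifP => // nu_u; rewrite index_mem.
case/lastP: nu nu_uniq => [// | nu x] nu_uniq.
have Ref_x : Ref e pi (rcons nu x) x \in colors_of (Ref e pi (rcons nu x)).
  by rewrite mem_colors_of codom_f.
apply: leq_trans (leq_bigmax_seq _ Ref_x isT).
move: nu_uniq; rewrite rcons_uniq => /andP [/negbTE x_notin_nu _].
rewrite ind_tag_Ref mem_rcons mem_head -cats1 index_cat x_notin_nu.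
by rewrite size_cat /= eqxx addn0 addn1.
Qed.

Lemma ir_node_uniq pi (Sel : rel V -> (V -> color) -> {set V}) nu :
  simple_graph e -> cell_selector Sel -> ir_node e pi Sel nu -> uniq nu.
Proof.
move=> e_simple Sel_selector; elim=> // {}nu v _ nu_uniq v_sel.
rewrite rcons_uniq nu_uniq andbT.
have [Sel_discrete [Sel_cell _]] := Sel_selector e e_simple (Ref e pi nu).
have /Sel_cell [v0 [Sel_def Sel_gt1]] : ~ injective (Ref e pi nu).
  by move/Sel_discrete => Sel0; rewrite Sel0 inE in v_sel.
have [w] : exists w, w \in Sel e (Ref e pi nu) :\ v.
  by apply/card_gt0P; move: Sel_gt1; rewrite (cardsD1 v) v_sel.
rewrite in_setD1 Sel_def inE => /andP [w_neq_v /eqP Ref_w].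
move: v_sel; rewrite Sel_def inE => /eqP Ref_v.
apply: contra w_neq_v => nu_v; apply/eqP.
by apply: (Ref_individualized (pi := pi) nu_v); rewrite Ref_w Ref_v.
Qed.

Definition cut_tags (l : nat) (t : color) : color :=
  if t is GenTree.Node n [:: a; GenTree.Leaf i]
  then GenTree.Node n [:: a; GenTree.Leaf (if i <= l then i else 0)] else t.

Lemma wl_init_take pi nu l :
  cut_tags l \o wl_init pi nu =1 wl_init pi (take l nu).
Proof.
move=> u; rewrite /= /wl_init; congr (GenTree.Node 0 [:: _; GenTree.Leaf _]).
case: (boolP (u \in nu)) => nu_u; last first.
  by rewrite (negbTE (contra (@mem_take _ _ _ _) nu_u)).
rewrite (in_take _ nu_u); case: ltnP => // u_lt_l.
by rewrite -{1}(cat_take_drop l nu) index_cat (in_take _ nu_u) u_lt_l.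
Qed.

Lemma colors_of_Ref_take pi nu l :
  colors_of (Ref e pi (take l nu))
  = sort col_le (undup (map (iter #|V| recolor_step (cut_tags l)) (colors_of (Ref e pi nu)))).
Proof. exact/colors_of_recolor/iter_recolor_wl_step/wl_init_take. Qed.

End Refinement.

Theorem lemma8 (V : finType) (e : rel V) (k : nat) (pi : V -> nat)
  (Sel : rel V -> (V -> color) -> {set V}) :
  simple_graph e -> is_coloring k pi -> cell_selector Sel ->
  forall n1 n2 : seq V, ir_node e pi Sel n1 -> ir_node e pi Sel n2 ->
  (size n1 <> size n2 -> node_color e pi n1 <> node_color e pi n2) /\
  ((exists l, l <= size n1 /\ l <= size n2 /\
      node_color e pi (take l n1) <> node_color e pi (take l n2)) ->
   node_color e pi n1 <> node_color e pi n2).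
Proof.
move=> e_simple _ Sel_selector n1 n2 n1_node n2_node.
have eq_colors nu1 nu2 : node_color e pi nu1 = node_color e pi nu2 ->
    colors_of (Ref e pi nu1) = colors_of (Ref e pi nu2) by case.
have n1_uniq := ir_node_uniq e_simple Sel_selector n1_node.
have n2_uniq := ir_node_uniq e_simple Sel_selector n2_node.
split=> [size_neq | [l [_ [_ prefix_neq]]]] /eq_colors colors12.
  apply: size_neq; rewrite -(bigmax_ind_tag_Ref e pi n1_uniq).
  by rewrite -(bigmax_ind_tag_Ref e pi n2_uniq) colors12.
by apply: prefix_neq; rewrite /node_color !quotient_Ref !colors_of_Ref_take colors12.
Qed.
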